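(* There exist a compact Hausdorff space $X$ and a UCO subset $Y$ of $X$ such that $Y$, with the subspace topology, is not compactly Choquet-complete. In particular, there exist an LCS-complete space and a UCO subset of it which is not LCS-complete.
   Context: A UCO subset of a space is the union of a closed subset and an open subset. Strong Choquet game: players $\beta$ and $\alpha$ alternate; at round $n$, $\beta$ picks a point $x_n$ and an open neighborhood $V_n$ of $x_n$ with $V_n\subseteq U_{n-1}$ (when $n\ge1$), and $\alpha$ picks an open $U_n$ with $x_n\in U_n\subseteq V_n$; strategies may depend on the whole history. A space is compactly Choquet-complete if $\alpha$ has a strategy ensuring that $(U_n)_n$ is a base of open neighborhoods of some non-empty compact saturated set. A space is LCS-complete if it is homeomorphic to a $G_\delta$ subset (countable intersection of open sets), with the subspace topology, of some locally compact sober space. *)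

From Stdlib Require Import List.
Import ListNotations.

Set Implicit Arguments.

Definition subset {X : Type} (A B : X -> Prop) : Prop := forall x, A x -> B x.

Record topology (X : Type) : Type := Topology {
  open : (X -> Prop) -> Prop;
  open_full : open (fun _ => True);
  open_inter : forall U V, open U -> open V -> open (fun x => U x /\ V x);
  open_union : forall F : (X -> Prop) -> Prop,
      (forall U, F U -> open U) -> open (fun x => exists U, F U /\ U x)
}.
Arguments open {X} t _.

Definition closed {X : Type} (T : topology X) (C : X -> Prop) : Prop :=
  open T (fun x => ~ C x).

Lemma subspace_full {X : Type} (T : topology X) (Y : X -> Prop) :
  exists U, open T U /\ forall y : {x | Y x}, True <-> U (proj1_sig y).
Proof. exists (fun _ => True). split; [apply open_full | tauto]. Qed.

Lemma subspace_inter {X : Type} (T : topology X) (Y : X -> Prop)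
  (A B : {x | Y x} -> Prop) :
  (exists U, open T U /\ forall y, A y <-> U (proj1_sig y)) ->
  (exists U, open T U /\ forall y, B y <-> U (proj1_sig y)) ->
  exists U, open T U /\ forall y, (A y /\ B y) <-> U (proj1_sig y).
Proof.
  intros [U [HU HA]] [V [HV HB]]. exists (fun x => U x /\ V x).
  split; [apply open_inter; assumption|].
  intro y. rewrite HA, HB. tauto.
Qed.

Lemma subspace_union {X : Type} (T : topology X) (Y : X -> Prop)
  (F : ({x | Y x} -> Prop) -> Prop) :
  (forall A, F A -> exists U, open T U /\ forall y, A y <-> U (proj1_sig y)) ->
  exists U, open T U /\ forall y, (exists A, F A /\ A y) <-> U (proj1_sig y).
Proof.
  intros HF.
  exists (fun x => exists W, (open T W /\ exists A, F A /\
             forall y, A y <-> W (proj1_sig y)) /\ W x).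
  split.
  - apply open_union. intros W [HW _]. exact HW.
  - intro y. split.
    + intros [A [HA Ay]]. destruct (HF A HA) as [W [HW HAW]].
      exists W. split; [split; [exact HW | exists A; split; assumption]|].
      apply HAW; exact Ay.
    + intros [W [[HW [A [HA HAW]]] Wy]]. exists A. split; [exact HA|].
      apply HAW; exact Wy.
Qed.

Definition subspace {X : Type} (T : topology X) (Y : X -> Prop) : topology {x | Y x} :=
  @Topology {x | Y x}
    (fun A => exists U, open T U /\ forall y, A y <-> U (proj1_sig y))
    (subspace_full T Y)
    (fun A B => @subspace_inter X T Y A B)
    (fun F => @subspace_union X T Y F).

Definition compact_set {X : Type} (T : topology X) (K : X -> Prop) : Prop :=
  forall F : (X -> Prop) -> Prop,
    (forall U, F U -> open T U) ->
    subset K (fun x => exists U, F U /\ U x) ->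
    exists l : list (X -> Prop), Forall F l /\ subset K (fun x => exists U, In U l /\ U x).

Definition compact_space {X : Type} (T : topology X) : Prop :=
  compact_set T (fun _ => True).

Definition hausdorff {X : Type} (T : topology X) : Prop :=
  forall x y : X, x <> y ->
    exists U V, open T U /\ open T V /\ U x /\ V y /\ forall z, ~ (U z /\ V z).

Definition saturated {X : Type} (T : topology X) (Q : X -> Prop) : Prop :=
  forall x, (forall U, open T U -> subset Q U -> U x) -> Q x.

Definition nbhd_base {X : Type} (T : topology X) (U : nat -> X -> Prop) (Q : X -> Prop) : Prop :=
  (forall n, open T (U n) /\ subset Q (U n)) /\
  (forall W, open T W -> subset Q W -> exists n, subset (U n) W).

Definition UCO {X : Type} (T : topology X) (Y : X -> Prop) : Prop :=
  exists C U, closed T C /\ open T U /\ forall x, Y x <-> (C x \/ U x).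

(** Strong Choquet game. A strategy for alpha receives the whole history
    (list of previous rounds (x_k, V_k, U_k)) and beta's current move (x_n, V_n)
    and returns U_n. *)
Definition alpha_strategy (X : Type) : Type :=
  list (X * (X -> Prop) * (X -> Prop)) -> X -> (X -> Prop) -> (X -> Prop).

Definition history {X : Type} (x : nat -> X) (V U : nat -> X -> Prop) (n : nat)
  : list (X * (X -> Prop) * (X -> Prop)) :=
  map (fun k => (x k, V k, U k)) (seq 0 n).

Definition legal_strategy {X : Type} (T : topology X) (s : alpha_strategy X) : Prop :=
  forall h x V, open T V -> V x ->
    open T (s h x V) /\ s h x V x /\ subset (s h x V) V.

Definition play_following {X : Type} (T : topology X) (s : alpha_strategy X)
  (x : nat -> X) (V U : nat -> X -> Prop) : Prop :=
  (forall n, open T (V n) /\ V n (x n)) /\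
  (forall n, subset (V (S n)) (U n)) /\
  (forall n, U n = s (history x V U n) (x n) (V n)).

Definition compactly_choquet_complete {X : Type} (T : topology X) : Prop :=
  exists s : alpha_strategy X, legal_strategy T s /\
    forall x V U, play_following T s x V U ->
      exists Q : X -> Prop, (exists q, Q q) /\ compact_set T Q /\ saturated T Q /\
        nbhd_base T U Q.

Definition locally_compact {X : Type} (T : topology X) : Prop :=
  forall x U, open T U -> U x ->
    exists W K, open T W /\ compact_set T K /\ W x /\ subset W K /\ subset K U.

Definition irreducible_closed {X : Type} (T : topology X) (C : X -> Prop) : Prop :=
  closed T C /\ (exists x, C x) /\
  forall F1 F2, closed T F1 -> closed T F2 ->
    subset C (fun x => F1 x \/ F2 x) -> subset C F1 \/ subset C F2.

Definition point_closure {X : Type} (T : topology X) (x : X) : X -> Prop :=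
  fun y => forall C, closed T C -> C x -> C y.

Definition sober {X : Type} (T : topology X) : Prop :=
  forall C, irreducible_closed T C ->
    exists! x, forall y, C y <-> point_closure T x y.

Definition G_delta {X : Type} (T : topology X) (G : X -> Prop) : Prop :=
  exists W : nat -> X -> Prop, (forall n, open T (W n)) /\
    forall x, G x <-> forall n, W n x.

Definition continuous {X Y : Type} (TX : topology X) (TY : topology Y) (f : X -> Y) : Prop :=
  forall V, open TY V -> open TX (fun x => V (f x)).

Definition homeomorphic {X Y : Type} (TX : topology X) (TY : topology Y) : Prop :=
  exists (f : X -> Y) (g : Y -> X),
    continuous TX TY f /\ continuous TY TX g /\
    (forall x, g (f x) = x) /\ (forall y, f (g y) = y).

Definition LCS_complete {X : Type} (T : topology X) : Prop :=
  exists (Z : Type) (TZ : topology Z) (G : Z -> Prop),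
    locally_compact TZ /\ sober TZ /\ G_delta TZ G /\
    homeomorphic T (subspace TZ G).

(** The space is X = D* x N*, where D = nat -> nat and C* denotes the one-point
    compactification of the discrete space C (the point at infinity is [None]);
    X is compact Hausdorff, hence locally compact and sober, hence LCS-complete.
    Inside X take Y = {(oo,oo)} u (D x N), the union of a closed point and an
    open set.  The key fact about Y is a diagonal argument: for every sequence
    of neighbourhoods V_n of the corner (oo,oo) in Y there is d in D such that
    every V_n contains all but finitely many points (d,m).  A compact subset of
    Y, on the other hand, only meets finitely many points of the column {d} x N.
    - Against alpha's strategy, beta keeps playing the corner; the compact set
      Q that alpha should produce misses a tail of column d, while each U_n
      contains such a tail: so Y is not compactly Choquet-complete.
    - If Y were homeomorphic to a G_delta subset G of a locally compact sober
      space Z, shrink compact neighbourhoods K_n of the image of the corner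
      inside the open sets defining G.  The closed set of points of Z avoiding
      the image of Y \ (tail of column d) meets every K_n, so sobriety (via a
      minimal closed set obtained from Zorn's lemma) yields a generic point x
      whose closure meets every K_n.  Then x lies in G, i.e. in the image of
      Y, but avoids every such set, which cover Y: a contradiction. *)

From Stdlib Require Import List Arith Lia Classical IndefiniteDescription
  PropExtensionality FunctionalExtensionality.
From mathcomp Require classical_sets.
Import ListNotations.

Lemma set_ext {X : Type} (A B : X -> Prop) : (forall x, A x <-> B x) -> A = B.
Proof.
  intros H. apply functional_extensionality; intro x.
  apply propositional_extensionality; apply H.
Qed.

Lemma open_ext {X : Type} (T : topology X) (A B : X -> Prop) :
  (forall x, A x <-> B x) -> open T A -> open T B.
Proof. intros H. rewrite (set_ext A B H). auto. Qed.

Lemma open_union_indexed {X I : Type} (T : topology X) (P : I -> Prop) (O : I -> X -> Prop) :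
  (forall i, P i -> open T (O i)) -> open T (fun x => exists i, P i /\ O i x).
Proof.
  intros HO.
  apply (open_ext T (fun x => exists U, (exists i, P i /\ U = O i) /\ U x)).
  - intro x. split.
    + intros [U [[i [Pi ->]] Ux]]. exists i. auto.
    + intros [i [Pi Ox]]. exists (O i). split; [exists i|]; auto.
  - apply open_union. intros U [i [Pi ->]]. auto.
Qed.

Lemma closed_compl {X : Type} (T : topology X) (U : X -> Prop) :
  open T U -> closed T (fun x => ~ U x).
Proof.
  intros HU. unfold closed. apply (open_ext T U); [|exact HU].
  intro x. split; [intros Ux H; exact (H Ux) | apply NNPP].
Qed.

Lemma closed_inter {X : Type} (T : topology X) (C1 C2 : X -> Prop) :
  closed T C1 -> closed T C2 -> closed T (fun x => C1 x /\ C2 x).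
Proof.
  intros H1 H2. unfold closed.
  apply (open_ext T (fun x => exists b : bool, True /\ ~ (if b then C1 x else C2 x))).
  - intro x. split.
    + intros [[|] [_ H]]; tauto.
    + intros H. apply not_and_or in H. destruct H; [exists true | exists false]; auto.
  - apply (open_union_indexed T (fun _ => True) (fun (b : bool) (x : X) => ~ (if b then C1 x else C2 x))).
    intros [|] _; assumption.
Qed.

Lemma point_closure_open {X : Type} (T : topology X) (x r : X) (U : X -> Prop) :
  point_closure T x r -> open T U -> U r -> U x.
Proof.
  intros Hpc HU Ur. apply NNPP. intros Ux. exact (Hpc _ (closed_compl T U HU) Ux Ur).
Qed.

Lemma increasing_le {X : Type} (O : nat -> X -> Prop) :
  (forall n, subset (O n) (O (S n))) -> forall n m, n <= m -> subset (O n) (O m).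
Proof.
  intros HO n m Hnm. induction Hnm as [|m _ IH]; intros x Hx; [exact Hx | apply HO, IH, Hx].
Qed.

Lemma decreasing_le {X : Type} (K : nat -> X -> Prop) :
  (forall n, subset (K (S n)) (K n)) -> forall n m, n <= m -> subset (K m) (K n).
Proof.
  intros HK n m Hnm. induction Hnm as [|m _ IH]; intros x Hx; [exact Hx | apply IH, HK, Hx].
Qed.

Lemma list_drop_member {X : Type} (P : (X -> Prop) -> Prop) (V : X -> Prop)
    (l : list (X -> Prop)) :
  Forall (fun U => P U \/ U = V) l ->
  exists l', Forall P l' /\
    forall x, (exists U, In U l /\ U x) -> V x \/ exists U, In U l' /\ U x.
Proof.
  induction l as [|U l IH]; intros Hl.
  - exists []. split; [constructor|]. intros x [U [[] _]].
  - inversion Hl as [|? ? HU Hl']; subst. destruct (IH Hl') as [l' [Hl'P Hl'c]].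
    destruct HU as [HU | ->].
    + exists (U :: l'). split; [constructor; assumption|].
      intros x [W [[->|HW] Wx]]; [right; exists W; simpl; auto|].
      destruct (Hl'c x (ex_intro _ W (conj HW Wx))) as [Vx|[W' [HW' W'x]]]; [left; exact Vx|].
      right. exists W'. simpl. auto.
    + exists l'. split; [exact Hl'P|].
      intros x [W [[<-|HW] Wx]]; [left; exact Wx|]. apply Hl'c. eauto.
Qed.

Lemma compact_inter_closed {X : Type} (T : topology X) (K C : X -> Prop) :
  compact_set T K -> closed T C -> compact_set T (fun x => K x /\ C x).
Proof.
  intros HK HC Fam HFam Hcov.
  destruct (HK (fun U => Fam U \/ U = (fun x => ~ C x))) as [l [Hl Hlcov]].
  - intros U [HU | ->]; [apply HFam, HU | exact HC].
  - intros x Kx. destruct (classic (C x)) as [Cx|Cx].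
    + destruct (Hcov x (conj Kx Cx)) as [U [HU Ux]]. exists U. auto.
    + exists (fun x => ~ C x). auto.
  - destruct (list_drop_member Fam (fun x => ~ C x) l Hl) as [l' [Hl' Hl'c]].
    exists l'. split; [exact Hl'|]. intros x [Kx Cx].
    destruct (Hl'c x (Hlcov x Kx)) as [H|H]; [contradiction | exact H].
Qed.

Lemma compact_in_chain {X : Type} (T : topology X) (K : X -> Prop) (Ch : (X -> Prop) -> Prop) :
  compact_set T K -> (forall O, Ch O -> open T O) ->
  (forall O O', Ch O -> Ch O' -> subset O O' \/ subset O' O) -> (exists O, Ch O) ->
  subset K (fun x => exists O, Ch O /\ O x) -> exists O, Ch O /\ subset K O.
Proof.
  intros HK HCh Htot [O0 HO0] Hcov.
  destruct (HK Ch HCh Hcov) as [l [Hl Hlcov]].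
  assert (Hbound : exists O, Ch O /\ forall U, In U l -> subset U O).
  { clear Hlcov. induction l as [|U l IH].
    - exists O0. split; [exact HO0 | intros U []].
    - inversion Hl as [|? ? HU Hl']; subst.
      destruct (IH Hl') as [O [HO HlO]].
      destruct (Htot U O HU HO) as [HUO|HOU].
      + exists O. split; [exact HO|]. intros W [<-|HW]; [exact HUO | exact (HlO W HW)].
      + exists U. split; [exact HU|]. intros W [<-|HW] x Wx; [exact Wx | exact (HOU x (HlO W HW x Wx))]. }
  destruct Hbound as [O [HO HlO]]. exists O. split; [exact HO|].
  intros x Kx. destruct (Hlcov x Kx) as [U [HU Ux]]. exact (HlO U HU x Ux).
Qed.
Lemma compact_in_increasing {X : Type} (T : topology X) (K : X -> Prop) (O : nat -> X -> Prop) :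
  compact_set T K -> (forall k, open T (O k)) -> (forall k, subset (O k) (O (S k))) ->
  subset K (fun x => exists k, O k x) -> exists M, subset K (O M).
Proof.
  intros HK HO Hinc Hcov.
  destruct (compact_in_chain T K (fun U => exists k, U = O k)) as [U [[M ->] HM]].
  - exact HK.
  - intros U [k ->]. apply HO.
  - intros U U' [k ->] [k' ->]. destruct (le_ge_dec k k') as [H|H];
      [left | right]; apply increasing_le; assumption.
  - exists (O 0). exists 0. reflexivity.
  - intros x Kx. destruct (Hcov x Kx) as [k Ox]. exists (O k). split; [exists k|]; auto.
  - exists M. exact HM.
Qed.

Lemma compact_finite_subcover_nat {X : Type} (T : topology X) (K : X -> Prop)
    (O : nat -> X -> Prop) :
  compact_set T K -> (forall k, open T (O k)) -> subset K (fun x => exists k, O k x) ->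
  exists M, subset K (fun x => exists k, k <= M /\ O k x).
Proof.
  intros HK HO Hcov.
  apply (compact_in_increasing T K (fun M x => exists k, k <= M /\ O k x)).
  - exact HK.
  - intro M. apply open_union_indexed. intros k _. apply HO.
  - intros M x [k [Hk Ox]]. exists k. split; [lia | exact Ox].
  - intros x Kx. destruct (Hcov x Kx) as [k Ox]. exists k, k. auto.
Qed.

Lemma hausdorff_point_closure {X : Type} (T : topology X) (x y : X) :
  hausdorff T -> point_closure T x y -> y = x.
Proof.
  intros HT Hpc. apply NNPP. intros Hne.
  destruct (HT x y (fun e => Hne (eq_sym e))) as [U [V [HU [HV [Ux [Vy Hdisj]]]]]].
  apply (Hdisj x). split; [exact Ux|]. exact (point_closure_open T x y V Hpc HV Vy).
Qed.

(** Hausdorff spaces are sober: irreducible closed sets are singletons. *)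
Lemma hausdorff_sober {X : Type} (T : topology X) : hausdorff T -> sober T.
Proof.
  intros HT C [HC [[x0 Cx0] Hirr]].
  assert (Hsingle : forall y, C y -> y = x0).
  { intros y Cy. apply NNPP. intros Hne.
    destruct (HT x0 y (fun e => Hne (eq_sym e))) as [U [V [HU [HV [Ux [Vy Hdisj]]]]]].
    destruct (Hirr _ _ (closed_compl T U HU) (closed_compl T V HV)) as [H|H].
    - intros z _. apply not_and_or, Hdisj.
    - exact (H x0 Cx0 Ux).
    - exact (H y Cy Vy). }
  exists x0. split.
  - intro y. split.
    + intros Cy. rewrite (Hsingle y Cy). intros C' _ H. exact H.
    + intros Hpc. rewrite (hausdorff_point_closure T x0 y HT Hpc). exact Cx0.
  - intros x' Hx'. apply (hausdorff_point_closure T x' x0 HT). apply Hx'. exact Cx0.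
Qed.

(** A locally compact sober space is LCS-complete (as the G_delta set of itself). *)
Lemma LCS_complete_of_locally_compact_sober {X : Type} (T : topology X) :
  locally_compact T -> sober T -> LCS_complete T.
Proof.
  intros Hlc Hsob. exists X, T, (fun _ => True).
  split; [exact Hlc|]. split; [exact Hsob|].
  split; [exists (fun _ _ => True); split; [intro; apply open_full | tauto]|].
  exists (fun x => exist _ x I), (@proj1_sig X (fun _ => True)).
  split; [|split; [|split]].
  - intros V [U [HU HV]]. apply (open_ext T U); [|exact HU].
    intro x. rewrite (HV (exist _ x I)). reflexivity.
  - intros V HV. exists V. split; [exact HV | reflexivity].
  - reflexivity.
  - intros [x []]. reflexivity.
Qed.

Lemma shrinking_compact_nbhds {Z : Type} (T : topology Z) (z0 : Z) (W : nat -> Z -> Prop) :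
  locally_compact T -> (forall n, open T (W n) /\ W n z0) ->
  exists O K : nat -> Z -> Prop,
    (forall n, open T (O n) /\ O n z0) /\ (forall n, compact_set T (K n)) /\
    (forall n, subset (O n) (K n)) /\ (forall n, subset (K n) (W n)) /\
    (forall n, subset (K (S n)) (K n)).
Proof.
  intros Hlc HW.
  assert (Hnbhd : forall A : Z -> Prop, exists OK : (Z -> Prop) * (Z -> Prop),
     open T A -> A z0 -> open T (fst OK) /\ compact_set T (snd OK) /\ fst OK z0 /\
       subset (fst OK) (snd OK) /\ subset (snd OK) A).
  { intro A. destruct (classic (open T A /\ A z0)) as [[HA Az0]|HA].
    - destruct (Hlc z0 A HA Az0) as [O [K HOK]]. exists (O, K). auto.
    - exists (A, A). tauto. }
  destruct (functional_choice _ Hnbhd) as [nbhd Hnbhd'].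
  set (A := fix A (n : nat) : Z -> Prop :=
     match n with 0 => W 0 | S k => fun z => fst (nbhd (A k)) z /\ W (S k) z end).
  assert (HA : forall n, open T (A n) /\ A n z0 /\ subset (A n) (W n)).
  { induction n as [|n [HAo [HAz _]]]; [split; [|split]; [apply HW..|intros z Hz; exact Hz]|].
    destruct (Hnbhd' (A n) HAo HAz) as [HO [_ [Hz0 _]]].
    split; [apply open_inter; [exact HO | apply HW]|].
    split; [split; [exact Hz0 | apply HW] | intros z Hz; exact (proj2 Hz)]. }
  assert (Hstep : forall n, open T (fst (nbhd (A n))) /\ compact_set T (snd (nbhd (A n))) /\
            fst (nbhd (A n)) z0 /\ subset (fst (nbhd (A n))) (snd (nbhd (A n))) /\
            subset (snd (nbhd (A n))) (A n)).
  { intro n. apply Hnbhd'; apply HA. }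
  exists (fun n => fst (nbhd (A n))), (fun n => snd (nbhd (A n))).
  split; [intro n; split; apply Hstep|]. split; [intro n; apply Hstep|].
  split; [intro n; apply Hstep|].
  split; [intros n z Kz; apply (HA n), (Hstep n), Kz|].
  intros n z Kz. destruct (Hstep (S n)) as [_ [_ [_ [_ HKA]]]].
  apply (Hstep n). exact (proj1 (HKA z Kz)).
Qed.
Definition meets_all {Z : Type} (K : nat -> Z -> Prop) (C : Z -> Prop) : Prop :=
  forall n, exists z, C z /\ K n z.

(** Zorn's lemma (applied to the complementary open sets): a closed set F
    meeting every compact K_n contains a minimal closed set with that property;
    compactness makes the property pass to intersections of chains. *)
Lemma minimal_closed_meeting {Z : Type} (T : topology Z) (K : nat -> Z -> Prop) (F : Z -> Prop) :
  (forall n, compact_set T (K n)) -> closed T F -> meets_all K F ->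
  exists C, closed T C /\ subset C F /\ meets_all K C /\
    forall C', closed T C' -> subset C' C -> meets_all K C' -> subset C C'.
Proof.
  intros HK HF HFK.
  set (P := fun O : Z -> Prop => open T O /\ meets_all K (fun z => F z /\ ~ O z)).
  destruct (@classical_sets.Zorn_bigcup Z P) as [O [[HO HOK] Hmax]].
  - unfold classical_sets.subset, classical_sets.total_on, classical_sets.bigcup,
      classical_sets.mkset.
    intros Ch HCh Htot. split.
    + apply (open_ext T (fun z => exists U, Ch U /\ U z)).
      * intro z. split; [intros [U [HU Uz]]; exists U | intros [U HU Uz]; exists U]; auto.
      * apply open_union. intros U HU. apply (HCh U HU).
    + intro n. apply NNPP. intros Hno.
      assert (Hcov : subset (fun z => K n z /\ F z) (fun z => exists U, Ch U /\ U z)).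
      { intros z [Kz Fz]. apply NNPP. intros Hz. apply Hno. exists z.
        split; [split; [exact Fz|] | exact Kz]. intros [U HU Uz]. eauto. }
      destruct (HFK n) as [z0 [Fz0 Kz0]].
      destruct (Hcov z0 (conj Kz0 Fz0)) as [U0 [HU0 _]].
      destruct (compact_in_chain T _ Ch (compact_inter_closed T _ _ (HK n) HF)
                  (fun U HU => proj1 (HCh U HU)) Htot (ex_intro _ U0 HU0) Hcov)
        as [U [HU HKU]].
      destruct (proj2 (HCh U HU) n) as [z [[Fz Uz] Kz]]. exact (Uz (HKU z (conj Kz Fz))).
  - exists (fun z => F z /\ ~ O z). split; [apply closed_inter; [exact HF | exact (closed_compl T O HO)]|].
    split; [intros z Hz; exact (proj1 Hz)|]. split; [exact HOK|].
    intros C' HC' HC'C HC'K.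
    assert (HOC' : subset O (fun z => ~ C' z)).
    { intros z Oz C'z. exact (proj2 (HC'C z C'z) Oz). }
    assert (HC'O : subset (fun z => ~ C' z) O).
    { apply NNPP. intros H. apply (Hmax (fun z => ~ C' z)); [split; [exact HOC' | exact H]|].
      split; [exact HC'|]. intro n. destruct (HC'K n) as [z [C'z Kz]].
      exists z. split; [split; [exact (proj1 (HC'C z C'z)) | intros H'; exact (H' C'z)] | exact Kz]. }
    intros z [Fz Oz]. apply NNPP. intros C'z. exact (Oz (HC'O z C'z)).
Qed.

Lemma minimal_closed_irreducible {Z : Type} (T : topology Z) (K : nat -> Z -> Prop) (C : Z -> Prop) :
  (forall n, subset (K (S n)) (K n)) -> closed T C -> meets_all K C ->
  (forall C', closed T C' -> subset C' C -> meets_all K C' -> subset C C') ->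
  irreducible_closed T C.
Proof.
  intros Hdec HC HCK Hmin. split; [exact HC|].
  split; [destruct (HCK 0) as [z [Cz _]]; exists z; exact Cz|].
  intros F1 F2 HF1 HF2 Hcov.
  assert (Hpiece : forall F', closed T F' ->
            subset C F' \/ exists n, forall z, C z -> F' z -> ~ K n z).
  { intros F' HF'. destruct (classic (meets_all K (fun z => C z /\ F' z))) as [Hm|Hm].
    - left. intros z Cz.
      exact (proj2 (Hmin _ (closed_inter T C F' HC HF') (fun z H => proj1 H) Hm z Cz)).
    - right. apply not_all_ex_not in Hm. destruct Hm as [n Hn].
      exists n. intros z Cz F'z Kz. apply Hn. exists z. auto. }
  destruct (Hpiece F1 HF1) as [H1|[n1 H1]]; [left; exact H1|].
  destruct (Hpiece F2 HF2) as [H2|[n2 H2]]; [right; exact H2|].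
  exfalso. destruct (HCK (Nat.max n1 n2)) as [z [Cz Kz]].
  destruct (Hcov z Cz) as [Fz|Fz]; [apply (H1 z Cz Fz) | apply (H2 z Cz Fz)];
    apply (decreasing_le K Hdec _ (Nat.max n1 n2)); [lia | exact Kz | lia | exact Kz].
Qed.

Lemma generic_point {Z : Type} (T : topology Z) (K : nat -> Z -> Prop) (F : Z -> Prop) :
  sober T -> (forall n, compact_set T (K n)) -> (forall n, subset (K (S n)) (K n)) ->
  closed T F -> meets_all K F ->
  exists x, F x /\ forall n, exists r, K n r /\ point_closure T x r.
Proof.
  intros Hsob HK Hdec HF HFK.
  destruct (minimal_closed_meeting T K F HK HF HFK) as [C [HC [HCF [HCK Hmin]]]].
  destruct (Hsob C (minimal_closed_irreducible T K C Hdec HC HCK Hmin)) as [x [Hx _]].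
  exists x. split.
  - apply HCF, Hx. intros C' _ H. exact H.
  - intro n. destruct (HCK n) as [r [Cr Kr]]. exists r. split; [exact Kr | apply Hx, Cr].
Qed.

(** Against any legal strategy of alpha, beta may play the same point p at
    every round, answering V_(n+1) = U_n. *)
Lemma constant_play {X : Type} (T : topology X) (s : alpha_strategy X) (p : X) :
  legal_strategy T s ->
  exists V U, play_following T s (fun _ => p) V U /\ forall n, open T (U n) /\ U n p.
Proof.
  intros Hleg.
  set (stage := fix stage (n : nat) : list (X * (X -> Prop) * (X -> Prop)) * (X -> Prop) :=
    match n with
    | 0 => ([], fun _ => True)
    | S k => let h := fst (stage k) in let V := snd (stage k) in
             (h ++ [(p, V, s h p V)], s h p V)
    end).
  set (V := fun n => snd (stage n)).
  set (U := fun n => s (fst (stage n)) p (V n)).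
  assert (Hhist : forall n, fst (stage n) = history (fun _ => p) V U n).
  { induction n as [|n IH]; [reflexivity|].
    unfold history. rewrite seq_S, map_app. simpl. fold (history (fun _ => p) V U n).
    rewrite <- IH. reflexivity. }
  assert (HV : forall n, open T (V n) /\ V n p).
  { induction n as [|n [HVo HVp]]; [split; [apply open_full | exact I]|].
    destruct (Hleg (fst (stage n)) p (V n) HVo HVp) as [HUo [HUp _]]. split; assumption. }
  exists V, U. split; [split; [exact HV | split]|].
  - intros n y Hy. exact Hy.
  - intro n. unfold U. rewrite Hhist. reflexivity.
  - intro n. destruct (Hleg (fst (stage n)) p (V n) (proj1 (HV n)) (proj2 (HV n))) as [HUo [HUp _]].
    split; assumption.
Qed.
(** Basic neighbourhoods in the one-point compactification C* of a discrete
    type C: [near a F] is {a} when a is a point, and the complement of the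
    finite set F when a is the point at infinity. *)
Definition avoids {C : Type} (F : list C) (a : option C) : Prop :=
  match a with None => True | Some c => ~ In c F end.

Definition near {C : Type} (a : option C) (F : list C) (b : option C) : Prop :=
  b = a \/ (a = None /\ avoids F b).

(** Basic neighbourhoods are open: they contain a neighbourhood of each of their points. *)
Lemma near_trans {C : Type} (a b c : option C) (F : list C) :
  near a F b -> near b F c -> near a F c.
Proof. unfold near. intros [->|[-> Hb]] [->|[-> Hc]]; auto. Qed.

Lemma near_app {C : Type} (a b : option C) (F1 F2 : list C) :
  near a (F1 ++ F2) b -> near a F1 b /\ near a F2 b.
Proof.
  intros [->|[-> Hb]]; [split; left; reflexivity|].
  destruct b as [c|]; simpl in Hb; split; right; split; auto; simpl;
    intros Hc; apply Hb, in_or_app; auto.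
Qed.

(** Hausdorff separation in C*: the list excluding the other point. *)
Definition sep_list {C : Type} (a : option C) : list C :=
  match a with Some c => [c] | None => [] end.

Lemma near_sep {C : Type} (a1 a2 b : option C) :
  near a1 (sep_list a2) b -> near a2 (sep_list a1) b -> a1 = a2.
Proof.
  unfold near. intros [H1|[H1 H2]] [H3|[H3 H4]]; subst; auto.
  - destruct a1; simpl in *; [exfalso; apply H4; left|]; reflexivity.
  - destruct a2; simpl in *; [exfalso; apply H2; left|]; reflexivity.
Qed.

(** Basic neighbourhoods are closed. *)
Lemma near_far {C : Type} (a b : option C) (F : list C) :
  ~ near a F b -> exists F', forall c, near b F' c -> ~ near a F c.
Proof.
  intros Hab. destruct b as [e|].
  - exists []. intros c [->|[Hb _]]; [exact Hab | discriminate].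
  - destruct a as [d|]; [|exfalso; apply Hab; right; split; reflexivity].
    exists [d]. intros c [->|[_ Hc]] [Hd|[Hd _]]; try discriminate.
    subst c. apply Hc. left. reflexivity.
Qed.

Section TwoPointCompactifications.
Variables A B : Type.

(** The product X = A* x B* with its product topology, given by boxes. *)
Definition point : Type := (option A * option B)%type.

Definition box (x : point) (F : list A) (G : list B) : point -> Prop :=
  fun z => near (fst x) F (fst z) /\ near (snd x) G (snd z).

Definition box_open (W : point -> Prop) : Prop :=
  forall x, W x -> exists F G, subset (box x F G) W.

Lemma box_open_full : box_open (fun _ => True).
Proof. intros x _. exists [], []. intros z _. exact I. Qed.

Lemma box_open_inter (U V : point -> Prop) :
  box_open U -> box_open V -> box_open (fun x => U x /\ V x).
Proof.
  intros HU HV x [Ux Vx].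
  destruct (HU x Ux) as [F1 [G1 H1]]. destruct (HV x Vx) as [F2 [G2 H2]].
  exists (F1 ++ F2), (G1 ++ G2). intros z [Ha Hb].
  apply near_app in Ha. apply near_app in Hb.
  split; [apply H1 | apply H2]; split; tauto.
Qed.

Lemma box_open_union (Fam : (point -> Prop) -> Prop) :
  (forall U, Fam U -> box_open U) -> box_open (fun x => exists U, Fam U /\ U x).
Proof.
  intros H x [U [HU Ux]]. destruct (H U HU x Ux) as [F [G HFG]].
  exists F, G. intros z Hz. exists U. auto.
Qed.

Definition alex2 : topology point :=
  @Topology point box_open box_open_full box_open_inter box_open_union.

Lemma box_center (x : point) F G : box x F G x.
Proof. split; left; reflexivity. Qed.

Lemma box_is_open (x : point) F G : open alex2 (box x F G).
Proof.
  intros y [Ha Hb]. exists F, G. intros z [Ha' Hb'].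
  split; [exact (near_trans _ _ _ _ Ha Ha') | exact (near_trans _ _ _ _ Hb Hb')].
Qed.

Lemma box_closed (x : point) F G : closed alex2 (box x F G).
Proof.
  intros z Hz. apply not_and_or in Hz. destruct Hz as [Ha|Hb].
  - destruct (near_far _ _ _ Ha) as [F' HF']. exists F', [].
    intros w [Hw _] [Hw' _]. exact (HF' _ Hw Hw').
  - destruct (near_far _ _ _ Hb) as [G' HG']. exists [], G'.
    intros w [_ Hw] [_ Hw']. exact (HG' _ Hw Hw').
Qed.

Lemma alex2_hausdorff : hausdorff alex2.
Proof.
  intros x y Hxy.
  exists (box x (sep_list (fst y)) (sep_list (snd y))), (box y (sep_list (fst x)) (sep_list (snd x))).
  split; [apply box_is_open|]. split; [apply box_is_open|].
  split; [apply box_center|]. split; [apply box_center|].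
  intros z [[Ha1 Hb1] [Ha2 Hb2]]. apply Hxy.
  destruct x as [a1 b1], y as [a2 b2]; simpl in *.
  rewrite (near_sep _ _ _ Ha1 Ha2), (near_sep _ _ _ Hb1 Hb2). reflexivity.
Qed.

(** Compactness of X: whatever box is attached to each point, finitely many
    of these boxes cover X (the box at (oo,oo) leaves finitely many rows and
    columns, each of which is covered by finitely many boxes). *)
Section FiniteBoxCover.
Variable nb : point -> list A * list B.
Let nbox (y : point) : point -> Prop := box y (fst (nb y)) (snd (nb y)).
Let row (c : A) : list point :=
  (Some c, None) :: map (fun e => (Some c, Some e)) (snd (nb (Some c, None))).
Let column (e : B) : list point :=
  (None, Some e) :: map (fun c => (Some c, Some e)) (fst (nb (None, Some e))).

Lemma row_covers (c : A) (b : option B) : exists y, In y (row c) /\ nbox y (Some c, b).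
Proof.
  destruct b as [e|]; [|exists (Some c, None); split; [left; reflexivity | apply box_center]].
  destruct (classic (In e (snd (nb (Some c, None))))) as [He|He].
  - exists (Some c, Some e). split; [right; apply in_map_iff; exists e; auto | apply box_center].
  - exists (Some c, None). split; [left; reflexivity|].
    split; [left; reflexivity | right; split; [reflexivity | exact He]].
Qed.

Lemma column_covers (e : B) (a : option A) : exists y, In y (column e) /\ nbox y (a, Some e).
Proof.
  destruct a as [c|]; [|exists (None, Some e); split; [left; reflexivity | apply box_center]].
  destruct (classic (In c (fst (nb (None, Some e))))) as [Hc|Hc].
  - exists (Some c, Some e). split; [right; apply in_map_iff; exists c; auto | apply box_center].
  - exists (None, Some e). split; [left; reflexivity|].
    split; [right; split; [reflexivity | exact Hc] | left; reflexivity].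
Qed.

Lemma box_cover_finite :
  exists pts, forall z, exists y, In y pts /\ nbox y z.
Proof.
  set (p0 := (None, None) : point).
  exists (p0 :: flat_map row (fst (nb p0)) ++ flat_map column (snd (nb p0))).
  intros [a b].
  destruct (classic (avoids (fst (nb p0)) a /\ avoids (snd (nb p0)) b)) as [[Ha Hb]|Hout].
  - exists p0. split; [left; reflexivity|]. split; right; auto.
  - apply not_and_or in Hout. destruct Hout as [Ha|Hb].
    + destruct a as [c|]; simpl in Ha; [apply NNPP in Ha | contradiction].
      destruct (row_covers c b) as [y [Hy Hby]]. exists y. split; [|exact Hby].
      right. apply in_or_app. left. apply in_flat_map. eauto.
    + destruct b as [e|]; simpl in Hb; [apply NNPP in Hb | contradiction].
      destruct (column_covers e a) as [y [Hy Hby]]. exists y. split; [|exact Hby].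
      right. apply in_or_app. right. apply in_flat_map. eauto.
Qed.
End FiniteBoxCover.

Lemma alex2_compact : compact_space alex2.
Proof.
  intros Fam HFam Hcov.
  assert (Hpick : forall x : point, exists U, Fam U /\ U x) by (intro x; apply Hcov; exact I).
  destruct (functional_choice _ Hpick) as [pick Hpick'].
  assert (Hnb : forall x, exists FG : list A * list B, subset (box x (fst FG) (snd FG)) (pick x)).
  { intro x. destruct (Hpick' x) as [HU Ux]. destruct (HFam _ HU x Ux) as [F [G HFG]].
    exists (F, G). exact HFG. }
  destruct (functional_choice _ Hnb) as [nb Hnb'].
  destruct (box_cover_finite nb) as [pts Hpts].
  exists (map pick pts). split.
  - apply Forall_forall. intros U HU. apply in_map_iff in HU.
    destruct HU as [y [<- _]]. apply Hpick'.
  - intros z _. destruct (Hpts z) as [y [Hy Hz]].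
    exists (pick y). split; [apply in_map, Hy | exact (Hnb' y z Hz)].
Qed.

(** Boxes are compact neighbourhoods, being closed in a compact space. *)
Lemma alex2_locally_compact : locally_compact alex2.
Proof.
  intros x U HU Ux. destruct (HU x Ux) as [F [G HFG]].
  exists (box x F G), (fun z => True /\ box x F G z).
  split; [apply box_is_open|].
  split; [apply compact_inter_closed; [apply alex2_compact | apply box_closed]|].
  split; [apply box_center|]. split; [intros z Hz; split; auto|].
  intros z [_ Hz]. exact (HFG z Hz).
Qed.

Lemma alex2_LCS_complete : LCS_complete alex2.
Proof.
  apply LCS_complete_of_locally_compact_sober;
    [apply alex2_locally_compact | apply hausdorff_sober, alex2_hausdorff].
Qed.

Definition Yset (x : point) : Prop :=
  match x with
  | (None, None) => True
  | (Some _, Some _) => True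
  | _ => False
  end.

Lemma Yset_UCO : UCO alex2 Yset.
Proof.
  exists (fun x => x = (None, None)), (fun x => exists c e, x = (Some c, Some e)).
  split; [|split].
  - intros [a b] Hz. exists [], []. intros w [Ha Hb] ->. simpl in *.
    destruct Ha as [Ha|[Ha _]]; destruct Hb as [Hb|[Hb _]]; subst; auto.
  - intros x [c [e ->]]. exists [], []. intros [a b] [Ha Hb]; simpl in *.
    destruct Ha as [->|[Ha _]]; [|discriminate].
    destruct Hb as [->|[Hb _]]; [eauto | discriminate].
  - intros [[c|] [e|]]; simpl; split; try tauto; intros H;
      try (destruct H as [H|[c' [e' H]]]; discriminate); eauto.
Qed.

End TwoPointCompactifications.

Arguments box {A B}.
Arguments Yset {A B}.

Definition Space : Type := point (nat -> nat) nat.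
Definition Ysub : Type := {x : Space | Yset x}.
Definition SY : topology Ysub := subspace (alex2 (nat -> nat) nat) Yset.
Definition corner : Ysub := exist Yset (None, None) I.
Definition grid (d : nat -> nat) (m : nat) : Ysub := exist Yset (Some d, Some m) I.

Lemma corner_nbhd (V : Ysub -> Prop) : open SY V -> V corner ->
  exists F G, forall y : Ysub, box (None, None) F G (proj1_sig y) -> V y.
Proof.
  intros [U [HU HV]] Vc. apply HV in Vc.
  destruct (HU _ Vc) as [F [G HFG]]. exists F, G. intros y Hy. apply HV, HFG, Hy.
Qed.

Lemma In_le_list_max (n : nat) (l : list nat) : In n l -> n <= list_max l.
Proof.
  intros Hn. pose proof (proj1 (list_max_le l (list_max l)) (le_n _)) as Hall.
  rewrite Forall_forall in Hall. exact (Hall n Hn).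
Qed.

Lemma diagonal_grid (V : nat -> Ysub -> Prop) : (forall n, open SY (V n) /\ V n corner) ->
  exists d, forall n, exists N, forall m, N <= m -> V n (grid d m).
Proof.
  intros HV.
  assert (Hbox : forall n, exists FG : list (nat -> nat) * list nat, forall y : Ysub,
            box (None, None) (fst FG) (snd FG) (proj1_sig y) -> V n y).
  { intro n. destruct (HV n) as [HVo HVc]. destruct (corner_nbhd _ HVo HVc) as [F [G HFG]].
    exists (F, G). exact HFG. }
  destruct (functional_choice _ Hbox) as [FG HFG].
  exists (fun k => S (list_max (map (fun f => f k) (fst (FG k))))).
  intro n. exists (S (list_max (snd (FG n)))). intros m Hm. apply HFG. split.
  - right. split; [reflexivity|]. intros Hin.
    apply (in_map (fun f => f n)), In_le_list_max in Hin. lia.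
  - right. split; [reflexivity|]. intros Hin. apply In_le_list_max in Hin. lia.
Qed.

(** The closed set {d} x [k, oo] of X, and its (open) complement in Y. *)
Definition tail (d : nat -> nat) (k : nat) : Space -> Prop :=
  box (Some d, None) [] (seq 0 k).

Definition off_tail (d : nat -> nat) (k : nat) (y : Ysub) : Prop :=
  ~ tail d k (proj1_sig y).

Lemma off_tail_open (d : nat -> nat) (k : nat) : open SY (off_tail d k).
Proof. exists (fun x => ~ tail d k x). split; [apply box_closed | reflexivity]. Qed.

Lemma off_tail_grid (d : nat -> nat) (k m : nat) : off_tail d k (grid d m) -> m < k.
Proof.
  intros H. destruct (lt_dec m k) as [Hmk|Hmk]; [exact Hmk|]. exfalso. apply H.
  split; [left; reflexivity | right; split; [reflexivity|]].
  simpl. rewrite in_seq. lia.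
Qed.

Lemma off_tail_increasing (d : nat -> nat) (k : nat) :
  subset (off_tail d k) (off_tail d (S k)).
Proof.
  intros y Hy [Ha Hb]. apply Hy. split; [exact Ha|].
  destruct Hb as [Hb|[Hb Hav]]; [left; exact Hb | right; split; [exact Hb|]].
  destruct (snd (proj1_sig y)) as [m|]; simpl in *; [|exact I].
  rewrite in_seq in *. lia.
Qed.

Lemma off_tail_cover (d : nat -> nat) (y : Ysub) : exists k, off_tail d k y.
Proof.
  destruct y as [[[c|] [m|]] Hy]; simpl in Hy; try contradiction.
  - exists (S m). intros [_ [Hb|[_ Hav]]]; [discriminate|]. apply Hav.
    apply in_seq. lia.
  - exists 0. intros [[Ha|[Ha _]] _]; discriminate.
Qed.

Lemma compact_off_tail (d : nat -> nat) (Q : Ysub -> Prop) :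
  compact_set SY Q -> exists M, subset Q (off_tail d M).
Proof.
  intros HQ. apply (compact_in_increasing SY Q (off_tail d)).
  - exact HQ.
  - apply off_tail_open.
  - apply off_tail_increasing.
  - intros y _. apply off_tail_cover.
Qed.

(** Y is not compactly Choquet-complete: if beta always plays the corner,
    every U_n contains a tail of column d, while alpha's compact set has a
    neighbourhood missing such a tail. *)
Lemma SY_not_compactly_choquet_complete : ~ compactly_choquet_complete SY.
Proof.
  intros [s [Hleg Hwin]].
  destruct (constant_play SY s corner Hleg) as [V [U [Hplay HU]]].
  destruct (Hwin _ _ _ Hplay) as [Q [_ [HQ [_ [_ Hbase]]]]].
  destruct (diagonal_grid U HU) as [d Hd].
  destruct (compact_off_tail d Q HQ) as [M HM].
  destruct (Hbase (off_tail d M) (off_tail_open d M) HM) as [n Hn].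
  destruct (Hd n) as [N HN].
  pose proof (off_tail_grid d M _ (Hn _ (HN (Nat.max N M) (Nat.le_max_l _ _)))). lia.
Qed.

Section NoLCSEmbedding.
Variables (Z : Type) (TZ : topology Z) (G : Z -> Prop).
Variables (f : Ysub -> {z | G z}) (g : {z | G z} -> Ysub).
Hypothesis f_continuous : continuous SY (subspace TZ G) f.
Hypothesis g_continuous : continuous (subspace TZ G) SY g.
Hypothesis gf : forall y, g (f y) = y.

Lemma pullback_off_tails (d : nat -> nat) :
  exists Ok : nat -> Z -> Prop, (forall k, open TZ (Ok k)) /\
    forall k w, off_tail d k (g w) <-> Ok k (proj1_sig w).
Proof.
  destruct (functional_choice (fun k Ok => open TZ Ok /\
              forall w, off_tail d k (g w) <-> Ok (proj1_sig w)))
    as [Ok HOk]; [intro k; exact (g_continuous _ (off_tail_open d k))|].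
  exists Ok. split; [intro k; apply HOk | intro k; apply HOk].
Qed.

Lemma off_tail_trace_misses (K O Ok : nat -> Z -> Prop) (d : nat -> nat) :
  (forall n, compact_set TZ (K n)) -> (forall n, subset (O n) (K n)) ->
  (forall n, exists N, forall m, N <= m -> O n (proj1_sig (f (grid d m)))) ->
  (forall k, open TZ (Ok k)) -> (forall k w, Ok k (proj1_sig w) -> off_tail d k (g w)) ->
  meets_all K (fun z => forall k, ~ Ok k z).
Proof.
  intros HK HOK Hgrid HOko HOk n. apply NNPP. intros Hno.
  assert (Hcov : subset (K n) (fun z => exists k, Ok k z)).
  { intros z Kz. apply NNPP. intros Hz. apply Hno. exists z.
    split; [intros k Hk; apply Hz; exists k; exact Hk | exact Kz]. }
  destruct (compact_finite_subcover_nat TZ (K n) Ok (HK n) HOko Hcov) as [M HM].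
  destruct (Hgrid n) as [N HN].
  destruct (HM _ (HOK n _ (HN (Nat.max N M) (Nat.le_max_l _ _)))) as [k [Hk Hz]].
  apply HOk in Hz. rewrite gf in Hz. apply off_tail_grid in Hz. lia.
Qed.

(** The generic point of that closed set lies in G (its closure meets every
    K_n, which lie in the n-th open defining G) but avoids the image of Y. *)
Lemma no_LCS_embedding : G_delta TZ G -> locally_compact TZ -> sober TZ -> False.
Proof.
  intros [W [HWo HW]] Hlc Hsob.
  set (z0 := proj1_sig (f corner)).
  assert (HWz0 : forall n, open TZ (W n) /\ W n z0).
  { intro n. split; [apply HWo | apply HW, (proj2_sig (f corner))]. }
  destruct (shrinking_compact_nbhds TZ z0 W Hlc HWz0) as [O [K [HO [HK [HOK [HKW HKdec]]]]]].
  destruct (diagonal_grid (fun n y => O n (proj1_sig (f y)))) as [d Hd].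
  { intro n. split; [|apply (HO n)].
    apply (f_continuous (fun w => O n (proj1_sig w))).
    exists (O n). split; [apply (HO n) | reflexivity]. }
  destruct (pullback_off_tails d) as [Ok [HOko HOk]].
  assert (HFc : closed TZ (fun z => forall k, ~ Ok k z)).
  { unfold closed. apply (open_ext TZ (fun z => exists k, True /\ Ok k z)).
    - intro z. split; [intros [k [_ Hk]] H; exact (H k Hk)|].
      intros H. apply NNPP. intros Hn. apply H. intros k Hk. apply Hn. exists k. auto.
    - apply open_union_indexed. intros k _. apply HOko. }
  destruct (generic_point TZ K _ Hsob HK HKdec HFc) as [x [Hx Hxr]].
  { apply (off_tail_trace_misses K O Ok d HK HOK Hd HOko). intros k w. apply HOk. }
  assert (Gx : G x).
  { apply HW. intro n. destruct (Hxr n) as [r [Kr Hr]].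
    exact (point_closure_open TZ x r (W n) Hr (HWo n) (HKW n r Kr)). }
  destruct (off_tail_cover d (g (exist G x Gx))) as [k Hk].
  exact (Hx k (proj1 (HOk k _) Hk)).
Qed.
End NoLCSEmbedding.

Lemma SY_not_LCS_complete : ~ LCS_complete SY.
Proof.
  intros [Z [TZ [G [Hlc [Hsob [HG [f [g [Hf [Hg [Hgf _]]]]]]]]]]].
  exact (no_LCS_embedding Z TZ G f g Hf Hg Hgf HG Hlc Hsob).
Qed.

Theorem proposition14p5 :
  (exists (X : Type) (T : topology X) (Y : X -> Prop),
      compact_space T /\ hausdorff T /\ UCO T Y /\
      ~ compactly_choquet_complete (subspace T Y)) /\
  (exists (X : Type) (T : topology X) (Y : X -> Prop),
      LCS_complete T /\ UCO T Y /\ ~ LCS_complete (subspace T Y)).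
Proof.
  split; exists Space, (alex2 (nat -> nat) nat), Yset.
  - split; [apply alex2_compact|]. split; [apply alex2_hausdorff|].
    split; [apply Yset_UCO | exact SY_not_compactly_choquet_complete].
  - split; [apply alex2_LCS_complete|].
    split; [apply Yset_UCO | exact SY_not_LCS_complete].
Qed.
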